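(* Let $X$ be a set, $A$ a commutative unital $\mathbb{R}$-algebra, $\bar{}\colon A\to\mathbb{R}^X$ a unital $\mathbb{R}$-algebra homomorphism, and $Q\subseteq A$ an archimedean quadratic module. Let $Y$, $m\colon X\to Y$, $K_{Q,X}$, $K_{Q,Y}$ be as in the context. (1) If $m(K_{Q,X})=K_{Q,Y}$, then for every $f\in A$: if $\bar f(x)>0$ for all $x\in K_{Q,X}$, then $f\in Q$. (2) If $\overline{m(K_{Q,X})}=K_{Q,Y}$ (closure taken in $Y$), then for every $f\in A$: if $\bar f(x)\ge 0$ for all $x\in K_{Q,X}$, then $f+\epsilon\in Q$ for every real $\epsilon>0$.
   Context: A quadratic module of $A$ is a subset $Q\subseteq A$ with $Q+Q\subseteq Q$, $a^2Q\subseteq Q$ for all $a\in A$, and $1\in Q$. $Q$ is archimedean if for every $a\in A$ there is an integer $n\ge1$ with $n+a\in Q$. $K_{Q,X}:=\{x\in X\mid \bar g(x)\ge 0\ \forall g\in Q\}$. $Y$ denotes the set of all unital $\mathbb{R}$-algebra homomorphisms $y\colon A\to\mathbb{R}$; for $a\in A$, $\hat a\colon Y\to\mathbb{R}$ is $\hat a(y)=y(a)$, and $Y$ carries the weakest topology making all $\hat a$ continuous. $K_{Q,Y}:=\{y\in Y\mid \hat g(y)\ge0\ \forall g\in Q\}$. The map $m\colon X\to Y$ is $m(x)(a)=\bar a(x)$. *)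

From HB Require Import structures.
From mathcomp Require Import all_boot all_order all_algebra.
From mathcomp Require Import all_classical all_reals all_analysis.
Set Implicit Arguments. Unset Strict Implicit. Unset Printing Implicit Defensive.
Import Order.TTheory GRing.Theory Num.Theory.
Import numFieldNormedType.Exports.
Local Open Scope classical_set_scope.
Local Open Scope ring_scope.

Section Defs.
Variables (R : realType) (A : comAlgType R).

Definition is_alg_hom (y : A -> R) : Prop :=
  [/\ forall a b, y (a + b) = y a + y b,
      forall (r : R) a, y (r *: a) = r * y a,
      forall a b, y (a * b) = y a * y b &
      y 1 = 1].

(* a map bar : A -> R^X is a unital R-algebra homomorphism into R^X
   (pointwise operations) iff each evaluation a |-> bar a x is one *)
Definition is_alg_hom_fun (X : Type) (bar : A -> X -> R) : Prop :=
  forall x, is_alg_hom (fun a => bar a x).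

Definition quadratic_module (Q : set A) : Prop :=
  [/\ forall a b, Q a -> Q b -> Q (a + b),
      forall a g, Q g -> Q (a ^+ 2 * g) &
      Q 1].

Definition archimedean_qm (Q : set A) : Prop :=
  forall a, exists n : nat, (0 < n)%N /\ Q (n%:R + a).

Definition Yset : set {ptws A -> R} := [set y | is_alg_hom y].

(* Y carries the initial topology of the inclusion into {ptws A -> R},
   i.e. the weakest topology making all evaluations y |-> y a continuous *)
Local Notation Ytype := (set_type Yset).

Definition hat (a : A) (y : Ytype) : R := (set_val y : A -> R) a.

Lemma m_proof (X : Type) (bar : A -> X -> R) (hbar : is_alg_hom_fun bar) (x : X) :
  ((fun a => bar a x) : {ptws A -> R}) \in Yset.
Proof. by apply: mem_set; exact: hbar. Qed.

Definition mmap (X : Type) (bar : A -> X -> R) (hbar : is_alg_hom_fun bar)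
  (x : X) : Ytype := SigSub (m_proof hbar x).

Definition K_X (X : Type) (bar : A -> X -> R) (Q : set A) : set X :=
  [set x | forall g, Q g -> 0 <= bar g x].

Definition K_Y (Q : set A) : set Ytype :=
  [set y | forall g, Q g -> 0 <= hat g y].

End Defs.

Notation Ytype R A := (set_type (@Yset R A)).

From HB Require Import structures.
From mathcomp Require Import all_boot all_order all_algebra.
From mathcomp Require Import all_classical all_reals all_analysis.
From mathcomp Require Import ring lra.
Import Order.TTheory GRing.Theory Num.Theory.
Import numFieldNormedType.Exports.
Local Open Scope classical_set_scope.
Local Open Scope ring_scope.
Set Implicit Arguments. Unset Strict Implicit. Unset Printing Implicit Defensive.

(* If [f] is positive at every character of [A] that is nonnegative on [Q], then
   [s f = 1 + q] for a sum of squares [s] and some [q \in Q]: otherwise adjoining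
   [-f] to [Q] keeps it proper, a maximal proper extension is total, and the
   supremum of the constants below an element is then a character nonnegative on
   [Q] and on [-f].  From such a certificate, [f - e \in Q] for small [e > 0]:
   after rescaling [s] into [[c, 1]], a sum of squares [x] approximating [1 / s]
   writes [f - e] as [x (s (f - e))] up to a geometrically small multiple of a
   bounded element.  Both parts of the theorem reduce to this: in (1) every point
   of [K_{Q,Y}] is some [m x] with [x \in K_{Q,X}]; in (2) [{y | hat f y >= 0}] is
   closed, so it contains the closure of [m(K_{Q,X})], and [f + eps] is positive
   on [K_{Q,Y}]. *)

Lemma scale_in_alg (R : pzRingType) (A : lalgType R) (r : R) (x : A) :
  r *: x = GRing.in_alg A r * x.
Proof. by rewrite in_algE mulr_algl. Qed.

Section QuadraticModule.
Variables (R : realType) (A : comAlgType R) (M : set A).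
Hypothesis hM : quadratic_module M.

Lemma qmD a b : M a -> M b -> M (a + b).
Proof. by case: hM => + _ _; apply. Qed.

Lemma qm_sqrM a g : M g -> M (a ^+ 2 * g).
Proof. by case: hM => _ + _; apply. Qed.

Lemma qm1 : M 1.
Proof. by case: hM. Qed.

Lemma qm_sqr a : M (a ^+ 2).
Proof. by rewrite -[_ ^+ 2]mulr1; apply/qm_sqrM/qm1. Qed.

Lemma qm0 : M 0.
Proof. by have := qm_sqr 0; rewrite expr2 mulr0. Qed.

Lemma qmZ (r : R) a : 0 <= r -> M a -> M (r *: a).
Proof.
move=> r_ge0 Ma; rewrite -(sqr_sqrtr r_ge0) scale_in_alg rmorphXn /=.
exact: qm_sqrM.
Qed.

Lemma qm_algM (r : R) a : 0 <= r -> M a -> M (r%:A * a).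
Proof. by rewrite mulr_algl; apply: qmZ. Qed.

Lemma qm_alg (r : R) : 0 <= r -> M r%:A.
Proof. by move=> r_ge0; apply: qmZ r_ge0 qm1. Qed.

Lemma qmD_alg (r : R) a : 0 <= r -> M a -> M (a + r%:A).
Proof. by move=> r_ge0 Ma; apply: qmD Ma (qm_alg r_ge0). Qed.

Lemma qmZ_inv (r : R) a : 0 < r -> M (r *: a) -> M a.
Proof.
move=> r_gt0 Mra; rewrite -[a]scale1r -(mulVf (lt0r_neq0 r_gt0)) -scalerA.
by apply: qmZ Mra; rewrite invr_ge0 ltW.
Qed.

(* [c] is the difference of the squares of [(c + 1) / 2] and [(c - 1) / 2]. *)
Lemma qm_supportM b c : M b -> M (- b) -> M (c * b).
Proof.
move=> Mb Mnb; pose h : A := (2^-1 : R)%:A.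
have -> : c * b = (h * (c + 1)) ^+ 2 * b + (h * (c - 1)) ^+ 2 * (- b).
  have e : 2^-1 * 2^-1 * 4 = 1 :> R by field.
  transitivity ((2^-1 * 2^-1 * 4 : R)%:A * (c * b)); first by rewrite e scale1r mul1r.
  by rewrite /h !scale_in_alg; ring.
by apply: qmD; apply: qm_sqrM.
Qed.

Definition qbounded (r : R) (a : A) := M (r%:A - a) /\ M (r%:A + a).

Lemma qboundedN r a : qbounded r a -> qbounded r (- a).
Proof. by case=> h1 h2; split; rewrite ?opprK. Qed.

Lemma qboundedD r s a b : qbounded r a -> qbounded s b -> qbounded (r + s) (a + b).
Proof.
case=> a1 a2 [b1 b2].
by split; [have := qmD a1 b1 | have := qmD a2 b2]; congr M; rewrite !scale_in_alg; ring.
Qed.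

Lemma qbounded_algM c r a : 0 <= c -> qbounded r a -> qbounded (c * r) (c%:A * a).
Proof.
move=> c_ge0 [h1 h2].
by split; [have := qm_algM c_ge0 h1 | have := qm_algM c_ge0 h2];
  congr M; rewrite !scale_in_alg; ring.
Qed.

(* [(d + b)^2 (d - b) + (d - b)^2 (d + b) = 2 d (d^2 - b^2)]. *)
Lemma qbounded_sqr d b : 0 < d -> qbounded d b -> M ((d ^+ 2)%:A - b ^+ 2).
Proof.
move=> d_gt0 [h1 h2]; apply: (@qmZ_inv (2 * d)); first by rewrite mulr_gt0.
have := qmD (qm_sqrM (d%:A + b) h1) (qm_sqrM (d%:A - b) h2); congr M.
by rewrite !scale_in_alg; ring.
Qed.

(* With [p := s a] and [q := r b], both bounded by [r s], one has
   [4 r s (r s -+ a b) = (2 r s)^2 - (p +- q)^2 + (p -+ q)^2]. *)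
Lemma qboundedM r s a b : 0 < r -> 0 < s ->
  qbounded r a -> qbounded s b -> qbounded (r * s) (a * b).
Proof.
move=> r_gt0 s_gt0 ha hb.
have rs_gt0 : 0 < r * s by rewrite mulr_gt0.
have hp : qbounded (r * s) (s%:A * a) by rewrite mulrC; apply: qbounded_algM (ltW s_gt0) ha.
have hq : qbounded (r * s) (r%:A * b) := qbounded_algM (ltW r_gt0) hb.
have hD := qbounded_sqr (addr_gt0 rs_gt0 rs_gt0) (qboundedD hp hq).
have hB := qbounded_sqr (addr_gt0 rs_gt0 rs_gt0) (qboundedD hp (qboundedN hq)).
have k_gt0 : 0 < 4 * (r * s) by rewrite mulr_gt0.
split; apply: (qmZ_inv k_gt0).
- have := qmD hD (qm_sqr (s%:A * a - r%:A * b)); congr M.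
  by rewrite !scale_in_alg; ring.
- have := qmD hB (qm_sqr (s%:A * a + r%:A * b)); congr M.
  by rewrite !scale_in_alg; ring.
Qed.

Lemma qboundedX r u n : 0 < r -> qbounded r u -> qbounded (r ^+ n) (u ^+ n).
Proof.
move=> r_gt0 hu; elim: n => [|n IH].
  by rewrite !expr0; split; rewrite scale1r ?subrr; [exact: qm0 | exact: qmD qm1 qm1].
by rewrite !exprS; apply: qboundedM => //; exact: exprn_gt0.
Qed.

Lemma archimedean_qbounded : archimedean_qm M ->
  forall a, exists2 K : R, 0 < K & qbounded K a.
Proof.
move=> harch a; have [m [m_gt0 Hm]] := harch (- a); have [n [n_gt0 Hn]] := harch a.
exists (m%:R + n%:R); first by rewrite addr_gt0 ?ltr0n.
by split; [have := qmD_alg (ler0n R n) Hm | have := qmD_alg (ler0n R m) Hn];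
  congr M; rewrite !scale_in_alg; ring.
Qed.

End QuadraticModule.

Section SumsOfSquares.
Variables (R : realType) (A : comAlgType R).
Implicit Types (M : set A) (a s : A).

Definition sos : set A := [set s | forall P : set A, quadratic_module P -> P s].

Lemma sos_qm : quadratic_module sos.
Proof.
split=> [a b Sa Sb P hP | a g Sg P hP | P hP].
- by apply: (qmD hP); [apply: Sa | apply: Sb].
- by apply: (qm_sqrM hP); apply: Sg.
- exact: qm1 hP.
Qed.

Lemma sos_sub M : quadratic_module M -> sos `<=` M.
Proof. by move=> hM s; apply. Qed.

Lemma qm_sosM M s m : quadratic_module M -> sos s -> M m -> M (s * m).
Proof.
move=> hM Ss; suff /Ss : quadratic_module [set s | forall m, M m -> M (s * m)] by apply.
split=> [a b Ha Hb m' Mm | a g Hg m' Mm | m' Mm].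
- by rewrite mulrDl; apply: (qmD hM); [apply: Ha | apply: Hb].
- by rewrite -mulrA; apply: (qm_sqrM hM); apply: Hg.
- by rewrite mul1r.
Qed.

Definition qm_adjoin M a : set A :=
  [set x | exists m s, [/\ M m, sos s & x = m + s * a]].

Lemma qm_adjoin_qm M a : quadratic_module M -> quadratic_module (qm_adjoin M a).
Proof.
move=> hM; split.
- move=> _ _ [m1 [s1 [M1 S1 ->]]] [m2 [s2 [M2 S2 ->]]].
  exists (m1 + m2), (s1 + s2).
  by split; [exact: (qmD hM M1 M2) | exact: (qmD sos_qm S1 S2) | ring].
- move=> b _ [m [s [Mm Ss ->]]].
  by exists (b ^+ 2 * m), (b ^+ 2 * s); split;
    [exact: (qm_sqrM hM _ Mm) | exact: (qm_sqrM sos_qm _ Ss) | ring].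
- by exists 1, 0; split; [exact: (qm1 hM) | exact: (qm0 sos_qm) | ring].
Qed.

Lemma qm_adjoin_sub M a : quadratic_module M -> M `<=` qm_adjoin M a.
Proof. by move=> hM m Mm; exists m, 0; split; [| exact: (qm0 sos_qm) | ring]. Qed.

Lemma qm_adjoin_gen M a : quadratic_module M -> qm_adjoin M a a.
Proof. by move=> hM; exists 0, 1; split; [exact: (qm0 hM) | exact: (qm1 sos_qm) | ring]. Qed.

Definition proper_qm M := quadratic_module M /\ ~ M (-1).

Definition max_proper_qm M :=
  proper_qm M /\ forall M', proper_qm M' -> M `<=` M' -> M' `<=` M.

(* If neither [a] nor [-a] is in [M], maximality puts [-1] in both adjoins:
   [-1 = m1 + s1 a = m2 - s2 a].  Cross-multiplying, [-(s1 + s2) = s2 m1 + s1 m2]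
   lies in [M], hence so does [-s1]; with [s1 \in M] this gives [a s1 \in M], and
   then [-1 = m1 + s1 a \in M]. *)
Lemma max_proper_qm_total M : max_proper_qm M -> forall a, M a \/ M (- a).
Proof.
case=> [[hM Mp] Mmax] a.
have adjoin_m1 b : ~ M b -> qm_adjoin M b (-1).
  move=> Mb; apply: contrapT => Hb; apply: Mb.
  by apply: (Mmax _ (conj (qm_adjoin_qm b hM) Hb) (qm_adjoin_sub b hM)); exact: qm_adjoin_gen.
apply: contrapT => /not_orP[/adjoin_m1[m1 [s1 [M1 S1 E1]]] /adjoin_m1[m2 [s2 [M2 S2 E2]]]].
have Mns12 : M (- (s1 + s2)).
  have -> : - (s1 + s2) = s2 * m1 + s1 * m2.
    transitivity (s2 * (m1 + s1 * a) + s1 * (m2 + s2 * - a)); last by ring.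
    by rewrite -E1 -E2; ring.
  by apply: (qmD hM); apply: (qm_sosM hM).
have Mns1 : M (- s1).
  by rewrite (_ : - s1 = - (s1 + s2) + s2); [exact: (qmD hM Mns12 (sos_sub hM S2)) | ring].
have Mas1 : M (a * s1) := qm_supportM hM a (sos_sub hM S1) Mns1.
by apply: Mp; rewrite E1 mulrC; apply: (qmD hM).
Qed.

Lemma qm_setU_chain M0 (F : set (set A)) : quadratic_module M0 ->
  total_on F subset -> (forall X, F X -> quadratic_module (M0 `|` X)) ->
  quadratic_module (M0 `|` \bigcup_(X in F) X).
Proof.
move=> h0 Ftot FP; set U := _ `|` _.
have common x y : U x -> U y ->
    exists2 Z, quadratic_module Z & [/\ Z x, Z y & Z `<=` U].
  have sub X : F X -> M0 `|` X `<=` U by move=> FX z [?|?]; [left | right; exists X].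
  case=> [M0x|[X FX Xx]] [M0y|[Y FY Yy]].
  - by exists M0 => //; split=> // z; left.
  - by exists (M0 `|` Y); [exact: FP | split; [left | right | exact: sub]].
  - by exists (M0 `|` X); [exact: FP | split; [right | left | exact: sub]].
  - have [XY|YX] := Ftot X Y FX FY.
    + by exists (M0 `|` Y); [exact: FP | split; [right; exact: XY | right | exact: sub]].
    + by exists (M0 `|` X); [exact: FP | split; [right | right; exact: YX | exact: sub]].
split=> [x y Ux Uy | a g Ug |]; last by left; exact: qm1.
- by have [Z hZ [Zx Zy ZU]] := common x y Ux Uy; apply/ZU/(qmD hZ).
- by have [Z hZ [Zg _ ZU]] := common g g Ug Ug; apply/ZU/(qm_sqrM hZ).
Qed.

(* Zorn's lemma is applied to the [X] with [M0 `|` X] proper, so that the empty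
   chain also has an upper bound. *)
Lemma exists_max_proper_qm M0 : proper_qm M0 ->
  exists2 M, max_proper_qm M & M0 `<=` M.
Proof.
move=> [h0 p0].
have [X [PX Xmax]] : exists X : set A, proper_qm (M0 `|` X) /\
    forall B, (X `<` B)%classic -> ~ proper_qm (M0 `|` B).
  apply: Zorn_bigcup => F FP Ftot; split; first by apply: qm_setU_chain => // X /FP[].
  by case=> [//|[X FX Xm1]]; have [_] := FP X FX; apply; right.
exists (M0 `|` X) => [|z]; last by left.
split=> // M' [hM' pM'] XM'.
have M0M' : M0 `<=` M' by move=> z M0z; apply: XM'; left.
have M'X : M' `<=` X.
  apply: contrapT => nM'X; apply: (Xmax M'); first by split=> // z Xz; apply: XM'; right.
  rewrite (_ : M0 `|` M' = M'); first by split.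
  by apply/seteqP; split=> z; [case=> // /M0M' | right].
by move=> z /M'X; right.
Qed.

End SumsOfSquares.

Section Character.
Variables (R : realType) (A : comAlgType R) (M : set A).
Hypotheses (hM : quadratic_module M) (pM : ~ M (-1)).
Hypotheses (totM : forall a, M a \/ M (- a)) (archM : archimedean_qm M).

Lemma qm_alg_sep a (r s : R) : M (a - r%:A) -> M (s%:A - a) -> r <= s.
Proof.
move=> Mar Msa; rewrite leNgt; apply/negP => lt_sr; apply: pM.
apply: (qmZ_inv hM (_ : 0 < r - s)); first by rewrite subr_gt0.
by have := qmD hM Mar Msa; congr M; rewrite !scale_in_alg; ring.
Qed.

Lemma qm_lower_has_sup a : has_sup [set r : R | M (a - r%:A)].
Proof.
split; first by have [n [_ Mna]] := archM a; exists (- n%:R) => /=;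
  have := Mna; congr M; rewrite !scale_in_alg; ring.
have [n [_ Mna]] := archM (- a); exists n%:R => r /= Mar.
by apply: qm_alg_sep Mar _; have := Mna; congr M; rewrite !scale_in_alg; ring.
Qed.

Definition qm_char a := sup [set r : R | M (a - r%:A)].

Lemma qm_char_ub a r : M (a - r%:A) -> r <= qm_char a.
Proof. by move=> Mar; apply: sup_upper_bound (qm_lower_has_sup a) _ Mar. Qed.

Lemma qm_lt_char a r : r < qm_char a -> M (a - r%:A).
Proof.
move=> lt_ra; have e_gt0 : 0 < qm_char a - r by rewrite subr_gt0.
have [e /= Mae lt_re] := sup_adherent e_gt0 (qm_lower_has_sup a).
rewrite (_ : a - r%:A = (a - e%:A) + (e - r)%:A); last by rewrite !scale_in_alg; ring.
by apply: (qmD_alg hM) Mae; move: lt_re; rewrite /qm_char; lra.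
Qed.

Lemma qm_char_lt a r : qm_char a < r -> M (r%:A - a).
Proof.
move=> lt_ar; have [Mar|] := totM (a - r%:A); last by rewrite opprB.
by have := qm_char_ub Mar; lra.
Qed.

Lemma qm_charE a t : (forall r, r < t -> M (a - r%:A)) ->
  (forall r, t < r -> M (r%:A - a)) -> qm_char a = t.
Proof.
move=> lo hi; apply/eqP; rewrite eq_le; apply/andP; split.
  apply: ge_sup; first by exists (t - 1); apply: lo; rewrite gtrBl ltr01.
  by move=> r Mar; apply/unstable.ler_gtP => s /hi; exact: qm_alg_sep Mar.
by apply/unstable.ler_ltP => r /lo; exact: qm_char_ub.
Qed.

Lemma qm_charC c : qm_char c%:A = c.
Proof. by apply: qm_charE => r lt_rc; rewrite -scalerBl; apply: (qm_alg hM); lra. Qed.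

Lemma qm_char0 : qm_char 0 = 0.
Proof. by rewrite -(scale0r (1 : A)) qm_charC. Qed.

Lemma qm_char_ge0 a : M a -> 0 <= qm_char a.
Proof. by move=> Ma; apply: qm_char_ub; rewrite scale0r subr0. Qed.

Lemma qm_charD a b : qm_char (a + b) = qm_char a + qm_char b.
Proof.
apply: qm_charE => r lt_r.
  pose d := (qm_char a + qm_char b - r) / 2.
  have Ma : M (a - (qm_char a - d)%:A) by apply: qm_lt_char; rewrite /d; lra.
  have Mb : M (b - (qm_char b - d)%:A) by apply: qm_lt_char; rewrite /d; lra.
  have -> : r = (qm_char a - d) + (qm_char b - d) by rewrite /d; lra.
  by have := qmD hM Ma Mb; congr M; rewrite !scale_in_alg; ring.
pose d := (r - qm_char a - qm_char b) / 2.
have Ma : M ((qm_char a + d)%:A - a) by apply: qm_char_lt; rewrite /d; lra.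
have Mb : M ((qm_char b + d)%:A - b) by apply: qm_char_lt; rewrite /d; lra.
have -> : r = (qm_char a + d) + (qm_char b + d) by rewrite /d; lra.
by have := qmD hM Ma Mb; congr M; rewrite !scale_in_alg; ring.
Qed.

Lemma qm_charN a : qm_char (- a) = - qm_char a.
Proof. by have := qm_charD a (- a); rewrite subrr qm_char0; lra. Qed.

Lemma qm_charZ c a : qm_char (c *: a) = c * qm_char a.
Proof.
wlog c_gt0 : c / 0 < c.
  move=> pos; case: (ltgtP c 0) => [c_lt0|/pos //|->]; last by rewrite scale0r qm_char0 mul0r.
  by rewrite -[c *: a]opprK -scaleNr qm_charN pos ?oppr_gt0 // mulNr opprK.
have c_neq0 : c != 0 by rewrite gt_eqF.
apply: qm_charE => r lt_r.
  rewrite (_ : c *: a - r%:A = c *: (a - (r / c)%:A)).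
    by apply: (qmZ hM (ltW c_gt0)); apply: qm_lt_char; rewrite ltr_pdivrMr // mulrC.
  by rewrite scalerBr scalerA mulrC divfK.
rewrite (_ : r%:A - c *: a = c *: ((r / c)%:A - a)).
  by apply: (qmZ hM (ltW c_gt0)); apply: qm_char_lt; rewrite ltr_pdivlMr // mulrC.
by rewrite scalerBr scalerA mulrC divfK.
Qed.

(* [b] lies between [-sqrt r] and [sqrt r] for every [r > 0], so [r - b^2 \in M]. *)
Lemma qm_char_sqr0 b : qm_char b = 0 -> qm_char (b ^+ 2) = 0.
Proof.
move=> yb; apply: qm_charE => r lt_r.
  have r_le0 : 0 <= - r by lra.
  by have := qmD_alg hM r_le0 (qm_sqr hM b); congr M; rewrite !scale_in_alg; ring.
have sr_gt0 : 0 < Num.sqrt r by rewrite sqrtr_gt0.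
have hb : qbounded M (Num.sqrt r) b.
  split; first by apply: qm_char_lt; rewrite yb.
  have := @qm_lt_char b (- Num.sqrt r); rewrite yb oppr_lt0 => /(_ sr_gt0).
  by congr M; rewrite !scale_in_alg; ring.
by have := qbounded_sqr hM sr_gt0 hb; rewrite sqr_sqrtr //; exact: ltW.
Qed.

Lemma qm_char_sqr a : qm_char (a ^+ 2) = qm_char a ^+ 2.
Proof.
pose t := qm_char a; pose b := a - t%:A.
have yb : qm_char b = 0 by rewrite qm_charD qm_charN qm_charC subrr.
rewrite (_ : a ^+ 2 = b ^+ 2 + (2 * t) *: b + (t ^+ 2)%:A); last first.
  by rewrite /b !scale_in_alg; ring.
by rewrite !qm_charD qm_char_sqr0 // qm_charZ yb qm_charC mulr0 !add0r.
Qed.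

Lemma qm_charM a b : qm_char (a * b) = qm_char a * qm_char b.
Proof.
have e : a * b = 4^-1 *: ((a + b) ^+ 2 - (a - b) ^+ 2).
  transitivity ((4^-1 * 4 : R)%:A * (a * b)).
    by rewrite mulVf ?pnatr_eq0 // scale1r mul1r.
  by rewrite !scale_in_alg; ring.
by rewrite e qm_charZ !qm_charD !qm_charN !qm_char_sqr !qm_charD !qm_charN; field.
Qed.

Lemma qm_char_is_alg_hom : is_alg_hom qm_char.
Proof.
split; [exact: qm_charD | exact: qm_charZ | exact: qm_charM |].
by have := qm_charC 1; rewrite scale1r.
Qed.

End Character.

(* [2 (1 + u + ... + u^(2m)) = 1 + u^(2m) + sum_(k < m) (u^k + u^(k+1))^2]. *)
Lemma sos_geometric (R : realType) (A : comAlgType R) (u : A) m :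
  exists2 P, sos P & (1 - u) * (1 + (u ^+ m) ^+ 2 + P) = 2 * (1 - (u ^+ m) ^+ 2 * u).
Proof.
elim: m => [|m [P SP IH]]; first by exists 0; [exact: (qm0 (sos_qm A)) | rewrite expr0; ring].
exists (P + (u ^+ m + u ^+ m * u) ^+ 2); first exact: (qmD (sos_qm A) SP (qm_sqr (sos_qm A) _)).
rewrite [u ^+ m.+1]exprSr; transitivity ((1 - u) * (1 + (u ^+ m) ^+ 2 + P) +
   (1 - u) * ((u ^+ m * u) ^+ 2 + (u ^+ m + u ^+ m * u) ^+ 2 - (u ^+ m) ^+ 2)); first ring.
by rewrite IH; ring.
Qed.

Lemma exists_exprn_le (R : archiRealFieldType) (rho eps : R) : 0 <= rho -> rho < 1 -> 0 < eps ->
  exists m, rho ^+ m <= eps.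
Proof.
move=> rho_ge0 rho_lt1 eps_gt0.
have rho_norm : `|rho| < 1 by rewrite ger0_norm.
have [N _ /(_ N (leqnn N))] := cvgr0_norm_le _ (cvg_expr rho_norm) _ eps_gt0.
by rewrite /= normrX ger0_norm // => ?; exists N.
Qed.

Section MulCancel.
Variables (R : realType) (A : comAlgType R) (M : set A).
Hypothesis hM : quadratic_module M.

(* [u := 1 - t] is bounded by [1 - c], and by [sos_geometric] the sum of squares
   [x := (1 + u^(2m) + P) / 2] satisfies [x t = 1 - u^(2m+1)],
   hence [g = x (t g) + u^(2m+1) g]. *)
Lemma qm_mul_cancel_approx (K c : R) (g t : A) : 0 < K -> 0 < c -> c < 1 ->
  qbounded M K g -> M (1 - t) -> M (t - c%:A) -> M (t * g) ->
  forall m, M (g + (K * (1 - c) ^+ m.*2.+1)%:A).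
Proof.
move=> K_gt0 c_gt0 c_lt1 hg M1t Mtc Mtg m.
pose u := 1 - t; have rho_gt0 : 0 < 1 - c by rewrite subr_gt0.
have hu : qbounded M (1 - c) u.
  split; [have := Mtc | have := qmD_alg hM (ltW rho_gt0) M1t];
    by congr M; rewrite /u !scale_in_alg; ring.
have [P SP eP] := sos_geometric u m.
pose x := (2^-1 : R) *: (1 + (u ^+ m) ^+ 2 + P).
have Sx : sos x.
  apply: (qmZ (sos_qm A)); first by rewrite invr_ge0 ler0n.
  exact: (qmD (sos_qm A) (qmD (sos_qm A) (qm1 (sos_qm A)) (qm_sqr (sos_qm A) _)) SP).
have xt : x * t = 1 - u ^+ m.*2.+1.
  have -> : x * t = (2^-1 : R)%:A * ((1 - u) * (1 + (u ^+ m) ^+ 2 + P)).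
    by rewrite /x /u !scale_in_alg; ring.
  transitivity ((2^-1 * 2 : R)%:A * (1 - (u ^+ m) ^+ 2 * u)).
    by rewrite eP !scale_in_alg; ring.
  by rewrite mulVf ?pnatr_eq0 // scale1r mul1r -exprM muln2 -exprSr.
have [_ Mug] :=
  qboundedM hM (exprn_gt0 m.*2.+1 rho_gt0) K_gt0 (qboundedX hM _ rho_gt0 hu) hg.
have := qmD hM (qm_sosM hM Sx Mtg) Mug; congr M.
by rewrite mulrA xt /u !scale_in_alg; ring.
Qed.

End MulCancel.

Section Positivstellensatz.
Variables (R : realType) (A : comAlgType R) (Q : set A).
Hypotheses (hQ : quadratic_module Q) (archQ : archimedean_qm Q).

Lemma qm_certificate f :
  (forall y, is_alg_hom y -> (forall g, Q g -> 0 <= y g) -> 0 < y f) ->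
  exists s q, [/\ sos s, Q q & s * f = 1 + q].
Proof.
move=> pos_f; apply: contrapT => no_cert.
have proper_adj : proper_qm (qm_adjoin Q (- f)).
  split=> [|[q [s [Qq Ss Em1]]]]; first exact: qm_adjoin_qm.
  apply: no_cert; exists s, q; split=> //.
  by rewrite (_ : s * f = 1 + q + (-1 - (q + s * - f))); [rewrite -Em1 subrr addr0 | ring].
have [M [[hM pM] Mmax] QfM] := exists_max_proper_qm proper_adj.
have QM : Q `<=` M by move=> x Qx; apply/QfM/qm_adjoin_sub.
have archM : archimedean_qm M.
  by move=> a; have [n [n_gt0 Qna]] := archQ a; exists n; split; last exact: QM.
have totM := max_proper_qm_total (conj (conj hM pM) Mmax).
have := pos_f _ (qm_char_is_alg_hom hM pM totM archM)
  (fun g Qg => qm_char_ge0 hM pM archM (QM g Qg)).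
have := qm_char_ge0 hM pM archM (QfM _ (qm_adjoin_gen (- f) hQ)).
by rewrite (qm_charN hM pM totM archM); lra.
Qed.

(* With [K] a bound of [f] and [T] a bound of [s] plus [1 / K], the multiplier
   [t := s / T] lies between [c := 1 / (K T)] and [1], and [t f = (1 + q) / T]
   leaves room for [e := 1 / (2 T)]. *)
Lemma certificate_normalize f s q : sos s -> Q q -> s * f = 1 + q ->
  exists t (c e : R),
    [/\ 0 < c < 1, 0 < e, Q (1 - t), Q (t - c%:A) & Q (t * (f - e%:A))].
Proof.
move=> Ss Qq sf.
have [K K_gt0 [QKf _]] := archimedean_qbounded hQ archQ f.
have [T0 T0_gt0 [QTs _]] := archimedean_qbounded hQ archQ s.
pose T := T0 + K^-1.
have Kinv_gt0 : 0 < K^-1 by rewrite invr_gt0.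
have T_gt0 : 0 < T by rewrite addr_gt0.
have Tinv_ge0 : 0 <= T^-1 by rewrite invr_ge0 ltW.
have e_gt0 : 0 < (2 * T)^-1 by rewrite invr_gt0 mulr_gt0.
have Q1t : Q (1 - T^-1 *: s).
  have := qmZ hQ Tinv_ge0 (qmD_alg hQ (ltW Kinv_gt0) QTs); congr Q.
  transitivity ((T^-1 * T)%:A - T^-1 *: s); last by rewrite mulVf ?gt_eqF // scale1r.
  by rewrite /T !scale_in_alg; ring.
exists (T^-1 *: s), (K * T)^-1, (2 * T)^-1; split=> //.
- rewrite invr_gt0 mulr_gt0 //= invf_lt1 ?mulr_gt0 //.
  by rewrite /T mulrDr mulfV ?gt_eqF // ltrDr mulr_gt0.
- have QKs : Q (K%:A * s - 1).
    have := qmD hQ (qm_sosM hQ Ss QKf) Qq; congr Q.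
    by rewrite mulrBr sf !scale_in_alg; ring.
  have c_ge0 : 0 <= (K * T)^-1 by rewrite invr_ge0 ltW ?mulr_gt0.
  have := qmZ hQ c_ge0 QKs; congr Q.
  transitivity (((K * T)^-1 * K) *: s - ((K * T)^-1)%:A); first by rewrite !scale_in_alg; ring.
  by congr (_ *: _ - _); field; rewrite !gt_eqF.
- have eT : T^-1 - (2 * T)^-1 = (2 * T)^-1 by field; rewrite gt_eqF.
  have eT_ge0 : 0 <= T^-1 - (2 * T)^-1 by rewrite eT ltW.
  have := qmD_alg hQ eT_ge0 (qmD hQ (qmZ hQ Tinv_ge0 Qq) (qmZ hQ (ltW e_gt0) Q1t)).
  congr Q.
  transitivity (T^-1 *: (s * f) - ((2 * T)^-1 * T^-1) *: s); last first.
    by rewrite !scale_in_alg; ring.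
  rewrite sf -eT !scale_in_alg; ring.
Qed.

Lemma qm_of_certificate f s q : sos s -> Q q -> s * f = 1 + q -> Q f.
Proof.
move=> Ss Qq sf.
have [t [c [e [/andP[c_gt0 c_lt1] e_gt0 Q1t Qtc Qtg]]]] := certificate_normalize Ss Qq sf.
have [K K_gt0 [QKf QKf']] := archimedean_qbounded hQ archQ f.
have Ke_gt0 : 0 < K + e by rewrite addr_gt0.
have hg : qbounded Q (K + e) (f - e%:A).
  split; [have := qmD_alg hQ (ltW (addr_gt0 e_gt0 e_gt0)) QKf | have := QKf'];
    by congr Q; rewrite !scale_in_alg; ring.
have rho_ge0 : 0 <= 1 - c by lra.
have rho_lt1 : 1 - c < 1 by lra.
have [n rho_n] := exists_exprn_le rho_ge0 rho_lt1 (divr_gt0 e_gt0 Ke_gt0).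
have := qm_mul_cancel_approx hQ Ke_gt0 c_gt0 c_lt1 hg Q1t Qtc Qtg n.
set r := (1 - c) ^+ _ => Qg.
have r_le : (K + e) * r <= e.
  rewrite mulrC -ler_pdivlMr //; apply: le_trans rho_n.
  apply: ler_wiXn2l => //; first exact: ltW.
  by rewrite -addnn; exact/leqW/leq_addr.
have slack : 0 <= e - (K + e) * r by rewrite subr_ge0.
by have := qmD_alg hQ slack Qg; congr Q; rewrite !scale_in_alg; ring.
Qed.

End Positivstellensatz.

Lemma jacobi_positivstellensatz (R : realType) (A : comAlgType R) (Q : set A) :
  quadratic_module Q -> archimedean_qm Q ->
  forall f : A, (forall y, K_Y Q y -> 0 < hat f y) -> Q f.
Proof.
move=> hQ archQ f pos_f.
have [s [q [Ss Qq sf]]] : exists s q, [/\ sos s, Q q & s * f = 1 + q].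
  apply: qm_certificate => // y hy yQ.
  have Yy : (y : {ptws A -> R}) \in @Yset R A by exact: mem_set.
  exact: (pos_f (SigSub Yy) yQ).
exact: (qm_of_certificate hQ archQ Ss Qq sf).
Qed.

Section PointEvaluation.
Variables (R : realType) (A : comAlgType R).

Lemma hat_is_alg_hom (y : Ytype R A) : is_alg_hom (fun a => hat a y).
Proof. exact: set_mem (valP y). Qed.

Lemma closed_hat_ge0 (a : A) : closed [set y : Ytype R A | 0 <= hat a y].
Proof.
have hat_cont : continuous (hat a : Ytype R A -> R).
  move=> y; apply: (@continuous_comp _ _ _ (@set_val _ (@Yset R A)) (proj a)).
    exact: initial_continuous.
  exact: proj_continuous.
exact: (continuous_closedP _).1 hat_cont _ (closed_ge (y:=0)).
Qed.

End PointEvaluation.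

Theorem theorem1p1 (R : realType) (A : comAlgType R) (X : Type)
  (bar : A -> X -> R) (hbar : is_alg_hom_fun bar) (Q : set A)
  (hQ : quadratic_module Q) (hQarch : archimedean_qm Q) :
  (mmap hbar @` K_X bar Q = K_Y Q ->
     forall f : A, (forall x, K_X bar Q x -> 0 < bar f x) -> Q f) /\
  (closure (mmap hbar @` K_X bar Q) = K_Y Q ->
     forall f : A, (forall x, K_X bar Q x -> 0 <= bar f x) ->
       forall eps : R, 0 < eps -> Q (f + eps%:A)).
Proof.
split=> [eqK f pos_f | eqK f nneg_f eps eps_gt0];
  apply: jacobi_positivstellensatz => // y; rewrite -eqK.
  by case=> x Kx <-; exact: pos_f.
have image_ge0 : mmap hbar @` K_X bar Q `<=` [set y | 0 <= hat f y].
  by move=> _ [x Kx <-]; exact: nneg_f.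
move=> /(closureS image_ge0); rewrite -(closure_id _).1; last exact: closed_hat_ge0.
move=> /= f_ge0.
have [hatD hatZ _ hat1] := hat_is_alg_hom y.
by rewrite hatD hatZ hat1 mulr1; lra.
Qed.
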